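(* Let $X$ be an irreducible holomorphic symplectic manifold of $\mathrm{OG6}$ type with a marking $\eta\colon H^2(X,\mathbb{Z})\to\mathbf{L}$, where $\mathbf{L}=U^{\oplus3}\oplus[-2]^{\oplus2}$. If $G\subset\mathrm{O}(\mathbf{L})$ is a nonsymplectic group of prime order $p$, then $p\in\{2,3,5,7\}$.
   Context: An irreducible holomorphic symplectic manifold is a simply connected compact Kähler manifold $X$ with $H^0(X,\Omega^2_X)$ spanned by a nowhere degenerate holomorphic 2-form $\sigma_X$; $\mathrm{OG6}$ type means deformation equivalent to O'Grady's six-dimensional example, and then $H^2(X,\mathbb{Z})$ with the Beauville–Bogomolov–Fujiki form is isometric to $\mathbf{L}$. A marking is an isometry $\eta\colon H^2(X,\mathbb{Z})\to\mathbf{L}$. An isometry $\varphi\in\mathrm{O}(\mathbf{L})$ is nonsymplectic if $\varphi\otimes\mathbb{C}$ acts nontrivially on the line $\mathbb{C}\,\eta(\sigma_X)$; a cyclic group is nonsymplectic if generated by a nonsymplectic isometry. $U$ is the hyperbolic plane, $[n]$ the rank one lattice with generator of square $n$. *)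

From HB Require Import structures.
From mathcomp Require Import all_boot all_order all_algebra.
From mathcomp Require Import complex.
From mathcomp Require Import reals.
Set Implicit Arguments. Unset Strict Implicit. Unset Printing Implicit Defensive.
Import Order.TTheory GRing.Theory Num.Theory.
Local Open Scope ring_scope.

(* The lattice L = U^{+3} + [-2]^{+2} on Z^8, basis e_0..e_7:
   (e_0,e_1),(e_2,e_3),(e_4,e_5) hyperbolic planes, e_6, e_7 of square -2. *)
Definition LGram_entry (i j : nat) : int :=
  if [&& (i < 6)%N, (j < 6)%N, i./2 == j./2 & i != j] then 1
  else if (i == j) && (6 <= i)%N then -2 else 0.

Definition LGram : 'M[int]_8 := \matrix_(i < 8, j < 8) LGram_entry i j.

(* O(L): integral automorphisms of Z^8 preserving the form
   (column-vector convention: x |-> g x). *)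
Definition in_OL (g : 'M[int]_8) : bool :=
  (g \in unitmx) && (g^T *m LGram *m g == LGram).

Definition toC (C : numClosedFieldType) (m n : nat) (A : 'M[int]_(m, n))
  : 'M[C]_(m, n) := map_mx (fun z : int => z%:~R) A.

Definition formC (C : numClosedFieldType) (x y : 'cV[C]_8) : C :=
  (x^T *m toC C LGram *m y) ord0 ord0.

(* A period: the class eta(sigma_X) in L (x) C of a nowhere degenerate
   holomorphic 2-form: q(w) = 0 and q(w, conj w) > 0. *)
Definition is_period (C : numClosedFieldType) (w : 'cV[C]_8) : Prop :=
  formC w w = 0 /\ 0 < formC w (map_mx Num.conj w).

Definition nonsymplectic (C : numClosedFieldType) (phi : 'M[int]_8)
  (w : 'cV[C]_8) : Prop :=
  exists2 lam : C, toC C phi *m w = lam *: w & lam != 1.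

From Pilot Require Import Defs.
From HB Require Import structures.
From mathcomp Require Import all_boot all_order all_algebra all_field.
From mathcomp Require Import complex.
From mathcomp Require Import reals.
Set Implicit Arguments. Unset Strict Implicit. Unset Printing Implicit Defensive.
Import Order.TTheory GRing.Theory Num.Theory.
Local Open Scope ring_scope.
Local Open Scope complex_scope.

(* The eigenvalue by which phi acts on the period is a p-th root of unity
   different from 1, hence a primitive one, and it is a root of the
   characteristic polynomial of phi, an integral polynomial of degree
   rank L = 8.  The minimal polynomial over Q of a primitive p-th root of
   unity is the cyclotomic polynomial of degree p - 1, so p - 1 <= 8. *)

Lemma prime_primitive_root (R : nzRingType) p (x : R) :
  prime p -> x ^+ p = 1 -> x != 1 -> p.-primitive_root x.
Proof.
move=> p_pr xp1 x_neq1.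
have [m prim_x m_dvd_p] := prim_order_exists (prime_gt0 p_pr) xp1.
have [m1 | m_neq1] := eqVneq m 1%N.
  by move: (prim_expr_order prim_x); rewrite m1 expr1 => /eqP; rewrite (negbTE x_neq1).
by move/(prime_nt_dvdP p_pr m_neq1): m_dvd_p => <-.
Qed.

Definition sum_Xn (R : nzRingType) n : {poly R} := \sum_(i < n) 'X^i.

Lemma horner_sum_Xn (R : comNzRingType) n (x : R) :
  (sum_Xn R n).[x] = \sum_(i < n) x ^+ i.
Proof. by rewrite horner_sum; apply: eq_bigr => i _; rewrite hornerXn. Qed.

Lemma map_sum_Xn (R S : nzRingType) (f : {rmorphism R -> S}) n :
  map_poly f (sum_Xn R n) = sum_Xn S n.
Proof. by rewrite rmorph_sum; apply: eq_bigr => i _; rewrite rmorphXn /= map_polyX. Qed.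

Lemma root_sum_Xn (R : idomainType) n (x : R) :
  x != 1 -> root (sum_Xn R n) x = (x ^+ n == 1).
Proof.
move=> x_neq1; rewrite /root horner_sum_Xn -[x ^+ n == 1]subr_eq0 subrX1 mulf_eq0.
by rewrite subr_eq0 (negbTE x_neq1).
Qed.

Lemma root_sum_Xn1 (R : numDomainType) n : (0 < n)%N -> ~~ root (sum_Xn R n) 1.
Proof.
move=> n_gt0; rewrite /root horner_sum_Xn.
under eq_bigr do rewrite expr1n.
by rewrite sumr_const card_ord pnatr_eq0 -lt0n.
Qed.

Lemma primitive_root_rat_poly_size (P : {poly rat}) n (z : algC) :
  n.-primitive_root z -> P != 0 -> root (map_poly ratr P) z ->
  (totient n < size P)%N.
Proof.
move=> prim_z P_neq0 Pz.
have [pz [Dpz _] dvd_pz] := minCpolyP z.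
have size_pz : size pz = (totient n).+1.
  rewrite -(size_map_poly (ratr : {rmorphism rat -> algC})) -Dpz.
  by rewrite (minCpoly_cyclotomic prim_z) size_cyclotomic.
by rewrite -size_pz dvdp_leq // -dvd_pz.
Qed.

Lemma prime_root_of_unity_rat_poly_size (C : numFieldType) (P : {poly rat}) p (x : C) :
  prime p -> x ^+ p = 1 -> x != 1 -> P != 0 -> root (map_poly ratr P) x ->
  (p <= size P)%N.
Proof.
move=> p_pr xp1 x_neq1 P_neq0 Px.
(* The common factor [G] of [P] and [sum_Xn p] is defined over Q, so its
   root [x] in [C] yields a root [z] in the algebraic numbers. *)
pose G := gcdp P (sum_Xn _ p).
have G_neq0 : G != 0 by rewrite gcdp_eq0 negb_and P_neq0.
have size_G : (1 < size G)%N.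
  rewrite -(size_map_poly (ratr : {rmorphism rat -> C})).
  apply: (root_size_gt1 (a := x)); first by rewrite map_poly_eq0.
  by rewrite gcdp_map root_gcd Px map_sum_Xn root_sum_Xn // xp1 eqxx.
have [z Gz] : exists z : algC, root (map_poly ratr G) z.
  by apply/closed_rootP; rewrite size_map_poly; case: (size G) size_G => [|[]].
move: Gz; rewrite gcdp_map root_gcd map_sum_Xn => /andP[Pz sum_z].
have z_neq1 : z != 1.
  by apply: contraTneq sum_z => ->; apply: root_sum_Xn1; apply: prime_gt0.
have prim_z : p.-primitive_root z.
  by apply: prime_primitive_root => //; apply/eqP; rewrite -root_sum_Xn.
have := primitive_root_rat_poly_size prim_z P_neq0 Pz.
by rewrite totient_prime // prednK // prime_gt0.
Qed.

Lemma char_poly_trmx (R : comNzRingType) n (A : 'M[R]_n) :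
  char_poly A^T = char_poly A.
Proof.
rewrite /char_poly -det_tr; congr (\det _).
by apply/matrixP => i j; rewrite !mxE eq_sym.
Qed.

Lemma eigenvector_root_char_poly (F : fieldType) n (A : 'M[F]_n) (v : 'cV_n) a :
  v != 0 -> A *m v = a *: v -> root (char_poly A) a.
Proof.
move=> v_neq0 Av; rewrite -char_poly_trmx -eigenvalue_root_char.
apply/eigenvalueP; exists v^T; last by rewrite trmx_eq0.
by rewrite -trmx_mul Av linearZ.
Qed.

Lemma eigenvector_expr (R : comNzRingType) n (A : 'M[R]_n.+1) (v : 'cV_n.+1) a k :
  A *m v = a *: v -> A ^+ k *m v = a ^+ k *: v.
Proof.
move=> Av; elim: k => [|k IHk]; first by rewrite !expr0 mul1mx scale1r.
by rewrite exprS -mulmxE -mulmxA IHk -scalemxAr Av scalerA -exprSr.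
Qed.

Lemma eigenvalue_root_of_unity (F : fieldType) n (A : 'M[F]_n.+1) (v : 'cV_n.+1) a k :
  v != 0 -> A *m v = a *: v -> A ^+ k = 1 -> a ^+ k = 1.
Proof.
move=> v_neq0 Av Ak1; apply/eqP; rewrite -subr_eq0.
have := eigenvector_expr k Av; rewrite Ak1 mul1mx => /eqP.
rewrite -subr_eq0 -{1}[v]scale1r -scalerBl scaler_eq0 (negbTE v_neq0) orbF.
by rewrite -oppr_eq0 opprB.
Qed.

Lemma char_poly_toC (C : numClosedFieldType) n (A : 'M[int]_n) :
  map_poly ratr (map_poly intr (char_poly A) : {poly rat}) = char_poly (toC C A).
Proof.
rewrite -map_poly_comp (eq_map_poly (rmorph_int (ratr : {rmorphism rat -> C}))).
exact: map_char_poly.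
Qed.

Lemma int_mx_prime_order_eigenvalue_le (C : numClosedFieldType) n
    (A : 'M[int]_n.+1) (w : 'cV[C]_n.+1) a p :
  prime p -> A ^+ p = 1 -> w != 0 -> toC C A *m w = a *: w -> a != 1 ->
  (p.-1 <= n.+1)%N.
Proof.
move=> p_pr Ap1 w_neq0 Aw a_neq1.
have ap1 : a ^+ p = 1.
  by apply: eigenvalue_root_of_unity w_neq0 Aw _; rewrite /toC -rmorphXn Ap1 rmorph1.
pose P : {poly rat} := map_poly intr (char_poly A).
have size_P : size P = n.+2.
  by rewrite size_map_inj_poly ?size_char_poly //; apply: intr_inj.
have P_neq0 : P != 0 by rewrite -size_poly_eq0 size_P.
have Pa : root (map_poly ratr P) a.
  by rewrite char_poly_toC (eigenvector_root_char_poly w_neq0 Aw).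
have := prime_root_of_unity_rat_poly_size p_pr ap1 a_neq1 P_neq0 Pa.
by rewrite size_P; case: p {p_pr Ap1 ap1 Pa}.
Qed.

Lemma period_neq0 (C : numClosedFieldType) (w : 'cV[C]_8) : is_period w -> w != 0.
Proof.
case=> _; apply: contraTneq => ->.
by rewrite /Defs.formC map_mx0 trmx0 !mul0mx mxE ltxx.
Qed.

Lemma prime_le9 p : prime p -> (p <= 9)%N -> p \in [:: 2; 3; 5; 7]%N.
Proof. by case: p => [|[|[|[|[|[|[|[|[|[|p]]]]]]]]]]. Qed.

Theorem proposition3p3 (R : realType) (omega : 'cV[R[i]]_8)
  (p : nat) (phi : 'M[int]_8) :
  is_period omega ->
  in_OL phi ->
  prime p -> phi ^+ p = 1 -> phi != 1 ->
  nonsymplectic phi omega ->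
  p \in [:: 2; 3; 5; 7]%N.
Proof.
move=> period_omega _ p_pr phi_p _ [lam phi_omega lam_neq1].
have := int_mx_prime_order_eigenvalue_le p_pr phi_p (period_neq0 period_omega)
  phi_omega lam_neq1.
by rewrite -ltnS prednK ?prime_gt0 //; apply: prime_le9.
Qed.
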